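(* Let $X$ be a real Hilbert space, let $m\ge1$ be an integer, $I=\{1,\dots,m\}$, let $(R_i)_{i\in I}$ be operators $X\to X$ and $\beta_i>0$ such that each $R_i$ is $\tfrac1{\beta_i}$-cocoercive. Set $R=R_m\cdots R_1$. Then there exists a nonexpansive $N\colon X\to X$ such that $$R=\beta_m\cdots\beta_1\Big(\tfrac1{1+m}\mathrm{Id}+\tfrac m{1+m}N\Big).$$
   Context: For $\beta>0$, $T\colon X\to X$ is $\tfrac1\beta$-cocoercive if $T=\tfrac\beta2(\mathrm{Id}+N)$ for some nonexpansive ($1$-Lipschitz) $N\colon X\to X$. *)

From Stdlib Require Import Reals.
Open Scope R_scope.

Record HilbertSpace := {
  hs_car :> Type;
  hs_zero : hs_car;
  hs_add : hs_car -> hs_car -> hs_car;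
  hs_opp : hs_car -> hs_car;
  hs_scal : R -> hs_car -> hs_car;
  hs_inner : hs_car -> hs_car -> R;
  hs_add_assoc : forall x y z, hs_add x (hs_add y z) = hs_add (hs_add x y) z;
  hs_add_comm : forall x y, hs_add x y = hs_add y x;
  hs_add_zero : forall x, hs_add x hs_zero = x;
  hs_add_opp : forall x, hs_add x (hs_opp x) = hs_zero;
  hs_scal_assoc : forall a b x, hs_scal a (hs_scal b x) = hs_scal (a * b) x;
  hs_scal_one : forall x, hs_scal 1 x = x;
  hs_scal_distr_l : forall a x y, hs_scal a (hs_add x y) = hs_add (hs_scal a x) (hs_scal a y);
  hs_scal_distr_r : forall a b x, hs_scal (a + b) x = hs_add (hs_scal a x) (hs_scal b x);
  hs_inner_sym : forall x y, hs_inner x y = hs_inner y x;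
  hs_inner_add_l : forall x y z, hs_inner (hs_add x y) z = hs_inner x z + hs_inner y z;
  hs_inner_scal_l : forall a x y, hs_inner (hs_scal a x) y = a * hs_inner x y;
  hs_inner_pos : forall x, 0 <= hs_inner x x;
  hs_inner_def : forall x, hs_inner x x = 0 -> x = hs_zero;
  hs_complete : forall u : nat -> hs_car,
    (forall eps, 0 < eps -> exists N, forall p q, (N <= p)%nat -> (N <= q)%nat ->
        sqrt (hs_inner (hs_add (u p) (hs_opp (u q))) (hs_add (u p) (hs_opp (u q)))) < eps) ->
    exists l, forall eps, 0 < eps -> exists N, forall n, (N <= n)%nat ->
        sqrt (hs_inner (hs_add (u n) (hs_opp l)) (hs_add (u n) (hs_opp l))) < eps
}.

Arguments hs_zero {h}.
Arguments hs_add {h}.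
Arguments hs_opp {h}.
Arguments hs_scal {h}.
Arguments hs_inner {h}.

Definition hs_sub {X : HilbertSpace} (x y : X) : X := hs_add x (hs_opp y).
Definition hs_norm {X : HilbertSpace} (x : X) : R := sqrt (hs_inner x x).

Definition nonexpansive {X : HilbertSpace} (N : X -> X) : Prop :=
  forall x y, hs_norm (hs_sub (N x) (N y)) <= hs_norm (hs_sub x y).

(* T is (1/beta)-cocoercive: T = (beta/2)(Id + N) with N nonexpansive. *)
Definition cocoercive_inv {X : HilbertSpace} (beta : R) (T : X -> X) : Prop :=
  exists N : X -> X, nonexpansive N /\
    forall x, T x = hs_scal (beta / 2) (hs_add x (N x)).

Fixpoint comp_ops {X : Type} (Rs : nat -> X -> X) (k : nat) : X -> X :=
  match k with
  | O => fun x => x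
  | S k' => fun x => Rs (S k') (comp_ops Rs k' x)
  end.

Fixpoint prod_R (b : nat -> R) (k : nat) : R :=
  match k with
  | O => 1
  | S k' => b (S k') * prod_R b k'
  end.

(* Call T k-averaged when
     k ‖Tx - Ty‖² + ‖(x - y) - (Tx - Ty)‖² <= k ‖x - y‖²;
   for k > 0 this says exactly that T = 1/(1+k) Id + k/(1+k) N with N
   nonexpansive.  Dividing each R_i by beta_i and rescaling its argument by the
   product of the previous betas gives a firmly nonexpansive (1-averaged) map,
   and composing a k-averaged map with a 1-averaged one is (k+1)-averaged.
   Hence R / (beta_m ... beta_1) is m-averaged. *)

From Stdlib Require Import Reals Psatz.
Open Scope R_scope.

Section InnerProduct.
Context {X : HilbertSpace}.

Lemma inner_add_r (x y z : X) : hs_inner z (hs_add x y) = hs_inner z x + hs_inner z y.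
Proof. rewrite hs_inner_sym, hs_inner_add_l, (hs_inner_sym X x), (hs_inner_sym X y). lra. Qed.

Lemma inner_scal_r a (x y : X) : hs_inner y (hs_scal a x) = a * hs_inner y x.
Proof. rewrite hs_inner_sym, hs_inner_scal_l, (hs_inner_sym X x). lra. Qed.

Lemma inner_zero_l (z : X) : hs_inner hs_zero z = 0.
Proof.
  assert (E := hs_inner_add_l X hs_zero hs_zero z).
  rewrite hs_add_zero in E. lra.
Qed.

Lemma inner_opp_l (x z : X) : hs_inner (hs_opp x) z = - hs_inner x z.
Proof.
  assert (E := hs_inner_add_l X x (hs_opp x) z).
  rewrite hs_add_opp, inner_zero_l in E. lra.
Qed.

Lemma inner_opp_r (x z : X) : hs_inner z (hs_opp x) = - hs_inner z x.
Proof. rewrite hs_inner_sym, inner_opp_l, hs_inner_sym. lra. Qed.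

Lemma hs_eq_inner (u v : X) : (forall z, hs_inner u z = hs_inner v z) -> u = v.
Proof.
  intros H.
  assert (E : hs_inner (hs_sub u v) (hs_sub u v) = 0).
  { unfold hs_sub. rewrite hs_inner_add_l, inner_opp_l, H. lra. }
  apply hs_inner_def in E. unfold hs_sub in E.
  rewrite <- (hs_add_zero X u), <- (hs_add_opp X v), (hs_add_comm X v),
    hs_add_assoc, E, hs_add_comm, hs_add_zero. reflexivity.
Qed.

Definition sqnorm (u : X) : R := hs_inner u u.

Lemma sqnorm_ge0 (u : X) : 0 <= sqnorm u.
Proof. apply hs_inner_pos. Qed.

Lemma sqnorm_zero : sqnorm (@hs_zero X) = 0.
Proof. apply inner_zero_l. Qed.

Lemma sqnorm_add (u v : X) : sqnorm (hs_add u v) = sqnorm u + 2 * hs_inner u v + sqnorm v.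
Proof. unfold sqnorm. rewrite hs_inner_add_l, !inner_add_r, (hs_inner_sym X v u). lra. Qed.

Lemma sqnorm_sub (u v : X) : sqnorm (hs_sub u v) = sqnorm u - 2 * hs_inner u v + sqnorm v.
Proof.
  unfold sqnorm, hs_sub.
  rewrite hs_inner_add_l, !inner_add_r, !inner_opp_l, !inner_opp_r, (hs_inner_sym X v u). lra.
Qed.

Lemma sqnorm_scal c (u : X) : sqnorm (hs_scal c u) = c * c * sqnorm u.
Proof. unfold sqnorm. rewrite hs_inner_scal_l, inner_scal_r. lra. Qed.

Lemma young_inner k (u v : X) : 2 * k * hs_inner u v <= sqnorm u + k * k * sqnorm v.
Proof.
  pose proof (sqnorm_ge0 (hs_sub u (hs_scal k v))) as H.
  rewrite sqnorm_sub, sqnorm_scal, inner_scal_r in H. lra.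
Qed.

Lemma hs_sub_eq0 (u v : X) : sqnorm (hs_sub u v) = 0 -> u = v.
Proof.
  intros H. apply hs_inner_def in H.
  apply hs_eq_inner; intro z.
  assert (E : hs_inner (hs_sub u v) z = 0) by (rewrite H; apply inner_zero_l).
  unfold hs_sub in E. rewrite hs_inner_add_l, inner_opp_l in E. lra.
Qed.

Lemma nonexpansive_sqnorm (N : X -> X) :
  (forall x y, sqnorm (hs_sub (N x) (N y)) <= sqnorm (hs_sub x y)) -> nonexpansive N.
Proof. intros H x y. apply sqrt_le_1_alt, H. Qed.

Lemma nonexpansive_sqnorm_le (N : X -> X) x y :
  nonexpansive N -> sqnorm (hs_sub (N x) (N y)) <= sqnorm (hs_sub x y).
Proof. intros hN. apply sqrt_le_0; [apply sqnorm_ge0 | apply sqnorm_ge0 | apply hN]. Qed.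

End InnerProduct.

Ltac hs_vec := apply hs_eq_inner; intro; unfold hs_sub;
  repeat rewrite ?hs_inner_add_l, ?hs_inner_scal_l, ?inner_opp_l.

Section Averaged.
Context {X : HilbertSpace}.

Definition averaged (k : R) (T : X -> X) : Prop :=
  forall x y, k * sqnorm (hs_sub (T x) (T y))
              + sqnorm (hs_sub (hs_sub x y) (hs_sub (T x) (T y)))
              <= k * sqnorm (hs_sub x y).

Lemma averaged0_id : averaged 0 (fun x => x).
Proof.
  intros x y.
  assert (hs_sub (hs_sub x y) (hs_sub x y) = hs_zero) as -> by apply hs_add_opp.
  rewrite sqnorm_zero. lra.
Qed.

Lemma averaged1_half_add_id (M : X -> X) :
  nonexpansive M -> averaged 1 (fun u => hs_scal (1/2) (hs_add u (M u))).
Proof.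
  intros hM u v.
  set (a := hs_sub u v). set (b := hs_sub (M u) (M v)).
  assert (Hb : sqnorm b <= sqnorm a) by apply nonexpansive_sqnorm_le, hM.
  assert (E1 : hs_sub (hs_scal (1/2) (hs_add u (M u))) (hs_scal (1/2) (hs_add v (M v)))
               = hs_scal (1/2) (hs_add a b)) by (unfold a, b; hs_vec; lra).
  assert (E2 : hs_sub a (hs_scal (1/2) (hs_add a b)) = hs_scal (1/2) (hs_sub a b))
    by (hs_vec; lra).
  rewrite E1, E2, !sqnorm_scal, sqnorm_add, sqnorm_sub. lra.
Qed.

Lemma averaged_comp k (G H : X -> X) :
  0 <= k -> averaged k G -> averaged 1 H -> averaged (k + 1) (fun x => H (G x)).
Proof.
  intros hk hG hH x y.
  specialize (hG x y). specialize (hH (G x) (G y)).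
  set (a := hs_sub x y) in *. set (g := hs_sub (G x) (G y)) in *.
  set (h := hs_sub (H (G x)) (H (G y))) in *.
  destruct (Rle_lt_or_eq_dec 0 k hk) as [hk0 | <-].
  - assert (E : hs_sub a h = hs_add (hs_sub a g) (hs_sub g h)) by (hs_vec; lra).
    rewrite E, sqnorm_add.
    pose proof (young_inner k (hs_sub a g) (hs_sub g h)).
    pose proof (sqnorm_ge0 h). pose proof (sqnorm_ge0 (hs_sub g h)).
    apply Rmult_le_reg_l with k; [lra|].
    assert ((k + 1) * (k * sqnorm g + sqnorm (hs_sub a g)) <= (k + 1) * (k * sqnorm a))
      by (apply Rmult_le_compat_l; lra).
    assert (k * (k + 1) * (sqnorm h + sqnorm (hs_sub g h)) <= k * (k + 1) * sqnorm g)
      by (apply Rmult_le_compat_l; nra).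
    nra.
  - (* a 0-averaged map preserves differences *)
    assert (Ea : a = g).
    { apply hs_sub_eq0. pose proof (sqnorm_ge0 (hs_sub a g)). lra. }
    rewrite Ea. lra.
Qed.

Lemma nonexpansive_rescale (N : X -> X) P :
  0 < P -> nonexpansive N -> nonexpansive (fun u => hs_scal (1/P) (N (hs_scal P u))).
Proof.
  intros hP hN. apply nonexpansive_sqnorm; intros u v.
  assert (E1 : hs_sub (hs_scal (1/P) (N (hs_scal P u))) (hs_scal (1/P) (N (hs_scal P v)))
               = hs_scal (1/P) (hs_sub (N (hs_scal P u)) (N (hs_scal P v))))
    by (hs_vec; lra).
  assert (E2 : hs_sub (hs_scal P u) (hs_scal P v) = hs_scal P (hs_sub u v))
    by (hs_vec; lra).
  pose proof (nonexpansive_sqnorm_le N (hs_scal P u) (hs_scal P v) hN) as H.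
  rewrite E2, sqnorm_scal in H. rewrite E1, sqnorm_scal.
  replace (sqnorm (hs_sub u v)) with (1/P * (1/P) * (P * P * sqnorm (hs_sub u v)))
    by (field; lra).
  apply Rmult_le_compat_l; [nra | exact H].
Qed.

Lemma cocoercive_rescale_averaged1 beta P (T : X -> X) :
  0 < beta -> 0 < P -> cocoercive_inv beta T ->
  exists H : X -> X, averaged 1 H /\ forall u, T (hs_scal P u) = hs_scal (beta * P) (H u).
Proof.
  intros hb hP [N [hN hT]].
  exists (fun u => hs_scal (1/2) (hs_add u (hs_scal (1/P) (N (hs_scal P u))))).
  split.
  - apply averaged1_half_add_id, nonexpansive_rescale; assumption.
  - intros u. rewrite hT. hs_vec. field. lra.
Qed.

Lemma averaged_decomp k (G : X -> X) :
  0 < k -> averaged k G ->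
  exists N : X -> X, nonexpansive N /\
    forall x, G x = hs_add (hs_scal (1 / (1 + k)) x) (hs_scal (k / (1 + k)) (N x)).
Proof.
  intros hk hG.
  exists (fun x => hs_scal (1/k) (hs_sub (hs_scal (k + 1) (G x)) x)). split.
  - apply nonexpansive_sqnorm; intros x y.
    specialize (hG x y).
    set (g := hs_sub (G x) (G y)) in *. set (r := hs_sub (hs_sub x y) g) in *.
    assert (Ea : hs_sub x y = hs_add g r) by (unfold r; hs_vec; lra).
    assert (EN : hs_sub (hs_scal (1/k) (hs_sub (hs_scal (k + 1) (G x)) x))
                        (hs_scal (1/k) (hs_sub (hs_scal (k + 1) (G y)) y))
                 = hs_scal (1/k) (hs_sub (hs_scal k g) r))
      by (unfold r, g; hs_vec; field; lra).
    rewrite EN, Ea, sqnorm_scal, sqnorm_sub, sqnorm_scal, sqnorm_add, hs_inner_scal_l.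
    rewrite Ea, sqnorm_add in hG.
    pose proof (sqnorm_ge0 r).
    assert ((k + 1) * ((1 - k) * sqnorm r) <= (k + 1) * (2 * k * hs_inner g r))
      by (apply Rmult_le_compat_l; nra).
    apply Rmult_le_reg_l with (k * k); [nra|].
    replace (k * k * (1 / k * (1 / k) * (k * k * sqnorm g - 2 * (k * hs_inner g r) + sqnorm r)))
      with (k * k * sqnorm g - 2 * (k * hs_inner g r) + sqnorm r) by (field; lra).
    nra.
  - intros x. hs_vec. field. lra.
Qed.

End Averaged.

Lemma prod_R_pos (beta : nat -> R) m :
  (forall i, (1 <= i <= m)%nat -> 0 < beta i) ->
  forall n, (n <= m)%nat -> 0 < prod_R beta n.
Proof.
  intros hb n; induction n as [|n IH]; simpl; intros; [lra|].
  apply Rmult_lt_0_compat; [apply hb; lia | apply IH; lia].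
Qed.

Section Composition.
Context {X : HilbertSpace} (m : nat) (Rs : nat -> X -> X) (beta : nat -> R).
Hypothesis hbeta : forall i, (1 <= i <= m)%nat -> 0 < beta i.
Hypothesis hR : forall i, (1 <= i <= m)%nat -> cocoercive_inv (beta i) (Rs i).

Lemma comp_ops_averaged n : (n <= m)%nat ->
  exists G : X -> X, averaged (INR n) G /\
    forall x, comp_ops Rs n x = hs_scal (prod_R beta n) (G x).
Proof.
  induction n as [|n IH]; intros hn.
  - exists (fun x => x). split; [exact averaged0_id|].
    intros x. simpl. hs_vec. lra.
  - destruct (IH ltac:(lia)) as [G [hG hcomp]].
    destruct (cocoercive_rescale_averaged1 (beta (S n)) (prod_R beta n) (Rs (S n)))
      as [H [hH hRH]];
      [apply hbeta; lia | apply (prod_R_pos beta m hbeta); lia | apply hR; lia |].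
    exists (fun x => H (G x)). split.
    + rewrite S_INR. apply averaged_comp; [apply pos_INR | exact hG | exact hH].
    + intros x. simpl. rewrite hcomp, hRH. reflexivity.
Qed.

End Composition.

Theorem mainTheorem11 (X : HilbertSpace) (m : nat) (Rs : nat -> X -> X)
  (beta : nat -> R) (hm : (1 <= m)%nat)
  (hbeta : forall i, (1 <= i <= m)%nat -> 0 < beta i)
  (hR : forall i, (1 <= i <= m)%nat -> cocoercive_inv (beta i) (Rs i)) :
  exists N : X -> X, nonexpansive N /\
    forall x, comp_ops Rs m x =
      hs_scal (prod_R beta m)
        (hs_add (hs_scal (1 / (1 + INR m)) x)
                (hs_scal (INR m / (1 + INR m)) (N x))).
Proof.
  destruct (comp_ops_averaged m Rs beta hbeta hR m (le_n m)) as [G [hG hcomp]].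
  assert (hk : 0 < INR m) by (apply lt_0_INR; lia).
  destruct (averaged_decomp (INR m) G hk hG) as [N [hN hGN]].
  exists N. split; [exact hN|].
  intros x. rewrite hcomp, hGN. reflexivity.
Qed.
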